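(* Let $G=(V,E)$ be an infinite, connected, locally finite, vertex-transitive graph, $o\in V$, $\Gamma\subset\operatorname{Aut}(G)$ a group acting transitively on $V$, and $\mathbb{P}$ a $\Gamma$-invariant and ergodic probability measure on $\mathbb{R}^V$ with $\mathbb{E}|s(o)|<\infty$. If $\mathbb{E}\,s(o)>1$, then $\mathbb{P}\{s\text{ stabilizes}\}=0$.
   Context: $\Delta u(x)=\sum_{y\sim x}(u(y)-u(x))$. $s:V\to\mathbb{R}$ stabilizes if there exists $f:V\to[0,\infty)$ with $s+\Delta f\le1$ pointwise. $\Gamma$-invariance means $T_\alpha s$ has law $\mathbb{P}$ whenever $s$ does, where $(T_\alpha f)(x)=f(\alpha^{-1}x)$, $\alpha\in\Gamma$; ergodicity is with respect to this $\Gamma$-action. *)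

From HB Require Import structures.
From mathcomp Require Import all_boot all_order all_algebra.
From mathcomp Require Import all_classical all_reals all_analysis.
Set Implicit Arguments. Unset Strict Implicit. Unset Printing Implicit Defensive.
Import Order.TTheory GRing.Theory Num.Theory.
Local Open Scope classical_set_scope.
Local Open Scope ring_scope.

Definition rfield (R : realType) (V : Type) : Type := V -> R.
HB.instance Definition _ (R : realType) (V : Type) := gen_eqMixin (rfield R V).
HB.instance Definition _ (R : realType) (V : Type) := gen_choiceMixin (rfield R V).
HB.instance Definition _ (R : realType) (V : Type) :=
  isPointed.Build (rfield R V) (fun _ => 0).

Section Defs.
Variables (R : realType) (V : choiceType).
Local Notation rfield := (rfield R V).

(** A locally finite simple graph on V is given by finite neighbour lists. *)
Definition adj (nbrs : V -> seq V) : rel V := fun x y => y \in nbrs x.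

Definition is_simple_graph (nbrs : V -> seq V) : Prop :=
  [/\ forall x, uniq (nbrs x),
      forall x y, adj nbrs x y = adj nbrs y x &
      forall x, ~~ adj nbrs x x].

Definition connected_graph (nbrs : V -> seq V) : Prop :=
  forall x y, exists p : seq V, path (adj nbrs) x p /\ last x p = y.

Definition infinite_graph : Prop := ~ finite_set [set: V].

Definition is_aut (nbrs : V -> seq V) (a : V -> V) : Prop :=
  bijective a /\ forall x y, adj nbrs (a x) (a y) = adj nbrs x y.

Definition vertex_transitive (nbrs : V -> seq V) : Prop :=
  forall x y, exists a, is_aut nbrs a /\ a x = y.

Definition is_inv (a b : V -> V) : Prop := cancel a b /\ cancel b a.

Definition aut_subgroup (nbrs : V -> seq V) (Gam : set (V -> V)) : Prop :=
  [/\ forall a, Gam a -> is_aut nbrs a,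
      Gam id,
      forall a b, Gam a -> Gam b -> Gam (a \o b) &
      forall a, Gam a -> exists b, Gam b /\ is_inv a b].

Definition transitive_action (Gam : set (V -> V)) : Prop :=
  forall x y, exists a, Gam a /\ a x = y.

(** T_a s = s o a^{-1}, written with the inverse b of a *)
Definition Tact (b : V -> V) (s : rfield) : rfield := fun x => s (b x).

Definition laplacian (nbrs : V -> seq V) (u : V -> R) (x : V) : R :=
  \sum_(y <- nbrs x) (u y - u x).

Definition stabilizes (nbrs : V -> seq V) (s : V -> R) : Prop :=
  exists f : V -> R, (forall x, 0 <= f x) /\
    forall x, s x + laplacian nbrs f x <= 1.

Definition coord_sets : set (set rfield) :=
  [set A | exists x (B : set R), measurable B /\ A = (fun s : rfield => s x) @^-1` B].

Local Notation RV := (g_sigma_algebraType coord_sets).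

Definition invariant_measure (Gam : set (V -> V)) (P : set RV -> \bar R) : Prop :=
  forall a b, Gam a -> is_inv a b ->
  forall A : set RV, measurable A -> P (Tact b @^-1` A) = P A.

Definition ergodic_measure (Gam : set (V -> V)) (P : set RV -> \bar R) : Prop :=
  forall A : set RV, measurable A ->
    (forall a b, Gam a -> is_inv a b -> Tact b @^-1` A = A) ->
    P A = 0%E \/ P A = 1%E.

End Defs.

Notation RV R V := (g_sigma_algebraType (@coord_sets R V)).

From HB Require Import structures.
From mathcomp Require Import all_boot all_order all_algebra.
From mathcomp Require Import all_classical all_reals all_analysis.
From mathcomp Require Import lra measurable_realfun.
Set Implicit Arguments.
Unset Strict Implicit.
Unset Printing Implicit Defensive.
Import Order.TTheory GRing.Theory Num.Theory.
Import numFieldTopology.Exports.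
Local Open Scope classical_set_scope.
Local Open Scope ring_scope.

(* If s stabilizes with odometer f, then f dominates the iterates u_k of the
   relaxation u_(k+1)(x) = max(0, (s(x) - 1 + sum_(y ~ x) u_k(y)) / deg x)
   started from u_0 = 0, so sup_k u_k(o) < oo.  By connectivity this event does
   not depend on the base point, hence it is Gam-invariant and has probability
   0 or 1.  Suppose it has probability 1.  Truncate u_k at a level M and
   integrate the inequality defining u_(k+1)(o): invariance of P under Gam
   gives E[u_k(y)] = E[u_k(o)] for each neighbour y, so
     E[s(o)^+; sup_k u_k(o) <= M] + deg a_k <= 1 + E[s(o)^-] + deg a_(k+1)
   with a_k in [0, M].  Telescoping in k gives
   E[s(o)^+; sup_k u_k(o) <= M] <= 1 + E[s(o)^-], and letting M -> oo,
   E[s(o)] <= 1. *)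

Lemma sumr_cst_seq (R : nmodType) (T : Type) (l : seq T) (c : R) :
  \sum_(y <- l) c = c *+ size l.
Proof. by rewrite big_const_seq count_predT -Monoid.iteropE. Qed.

Lemma bounded_drift_le0 (R : archiFieldType) (c M : R) (b : nat -> R) :
  (forall k, c + b k <= b k.+1) -> (forall k, b k <= M) -> c <= 0.
Proof.
move=> drift bM; have drift_iter k : c *+ k + b 0%N <= b k.
  elim: k => [|k IHk]; first by rewrite mulr0n add0r.
  by rewrite mulrS -addrA; apply: le_trans (drift k); rewrite lerD2l.
rewrite leNgt; apply/negP => c_gt0.
pose n := Num.bound ((M - b 0%N) / c).
have n_gt : (M - b 0%N) / c < n%:R.
  by apply/archi_boundP/divr_ge0; rewrite ?subr_ge0 ?bM ?ltW.
have := le_trans (drift_iter n) (bM n).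
rewrite ltr_pdivrMr // in n_gt; rewrite -mulr_natl.
lra.
Qed.

Lemma bounded_drift_lee (R : realType) (x y : \bar R) (b : nat -> \bar R)
    (M : R) :
  y \is a fin_num -> (forall k, (0 <= b k <= M%:E)%E) ->
  (forall k, x + b k <= y + b k.+1)%E -> (x <= y)%E.
Proof.
move=> y_fin b_bnd drift.
have b_fin k : b k \is a fin_num.
  have /andP[b_ge0 b_le] := b_bnd k.
  by rewrite ge0_fin_numE // (le_lt_trans b_le) ?ltry.
have bE k : b k = (fine (b k))%:E by rewrite fineK.
case: x drift => [r| |] drift; last by rewrite leNye.
- rewrite -(fineK y_fin) lee_fin -subr_le0.
  apply: (@bounded_drift_le0 _ _ M (fine \o b)) => k /=.
    have := drift k; rewrite -(fineK y_fin) bE [b k.+1]bE -!EFinD lee_fin.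
    lra.
  by have /andP[_] := b_bnd k; rewrite bE lee_fin.
- by have := drift 0%N; rewrite bE [b 1%N]bE -(fineK y_fin) -EFinD leye_eq.
Qed.

Section NonnegIntegral.
Context {d : measure_display} (T : measurableType d) (R : realType)
  (mu : {measure set T -> \bar R}).
Implicit Types f g : T -> R.

Lemma ge0_le_integral_EFin f g :
  measurable_fun setT f -> measurable_fun setT g ->
  (forall x, 0 <= f x) -> (forall x, f x <= g x) ->
  (\int[mu]_x (f x)%:E <= \int[mu]_x (g x)%:E)%E.
Proof.
move=> mf mg f_ge0 fg; apply: ge0_le_integral => //.
- by move=> x _; rewrite lee_fin.
- exact/measurable_EFinP.
- exact/measurable_EFinP.
- by move=> x _; rewrite lee_fin.
Qed.

Lemma ge0_integral_EFinD f g :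
  measurable_fun setT f -> measurable_fun setT g ->
  (forall x, 0 <= f x) -> (forall x, 0 <= g x) ->
  (\int[mu]_x (f x + g x)%:E = \int[mu]_x (f x)%:E + \int[mu]_x (g x)%:E)%E.
Proof.
move=> mf mg f_ge0 g_ge0; under eq_integral do rewrite EFinD.
by apply: ge0_integralD => //; (try by move=> x _; rewrite lee_fin);
  exact/measurable_EFinP.
Qed.

Lemma ge0_integral_EFinZl (c : R) f : measurable_fun setT f ->
  (forall x, 0 <= f x) -> 0 <= c ->
  (\int[mu]_x (c * f x)%:E = c%:E * \int[mu]_x (f x)%:E)%E.
Proof.
move=> mf f_ge0 c_ge0; under eq_integral do rewrite EFinM.
by apply: ge0_integralZl_EFin => //; [move=> x _; rewrite lee_fin|
  exact/measurable_EFinP].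
Qed.

Lemma ge0_integral_EFin_sum (I : Type) (l : seq I) (F : I -> T -> R) :
  (forall i, measurable_fun setT (F i)) -> (forall i x, 0 <= F i x) ->
  (\int[mu]_x (\sum_(i <- l) F i x)%:E = \sum_(i <- l) \int[mu]_x (F i x)%:E)%E.
Proof.
move=> mF F_ge0; under eq_integral do rewrite -sumEFin.
apply: ge0_integral_sum => // [i|i x _]; last by rewrite lee_fin.
exact/measurable_EFinP.
Qed.

End NonnegIntegral.

Section Odometer.
Variables (R : realType) (V : choiceType) (nbrs : V -> seq V).
Local Notation deg x := ((size (nbrs x))%:R : R).

Fixpoint odometer_approx (k : nat) (s : V -> R) (x : V) : R :=
  if k is k'.+1 then
    Num.max 0 ((s x - 1 + \sum_(y <- nbrs x) odometer_approx k' s y) / deg x)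
  else 0.

Lemma odometer_approx_ge0 k s x : 0 <= odometer_approx k s x.
Proof. by case: k => //= k; rewrite le_max lexx. Qed.

Lemma laplacianE (f : V -> R) x :
  laplacian nbrs f x = \sum_(y <- nbrs x) f y - deg x * f x.
Proof. by rewrite /laplacian sumrB sumr_cst_seq mulr_natl. Qed.

Definition odometer_bounded (s : V -> R) (x : V) :=
  exists M : R, forall k, odometer_approx k s x <= M.

Lemma is_aut_inv a b : is_aut nbrs a -> is_inv a b -> is_aut nbrs b.
Proof.
move=> [_ a_adj] [ab ba]; split; first by exists a.
by move=> x y; rewrite -a_adj !ba.
Qed.

Lemma perm_nbrs_aut b x : is_simple_graph nbrs -> is_aut nbrs b ->
  perm_eq (map b (nbrs x)) (nbrs (b x)).
Proof.
move=> [nbrs_uniq _ _] [[c bc cb] b_adj]; apply: uniq_perm.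
- by rewrite map_inj_uniq ?nbrs_uniq //; exact: can_inj bc.
- exact: nbrs_uniq.
move=> z; rewrite -[z]cb mem_map; last exact: can_inj bc.
exact: esym (b_adj x (c z)).
Qed.

Lemma odometer_approx_aut b k s x : is_simple_graph nbrs -> is_aut nbrs b ->
  odometer_approx k (Tact b s) x = odometer_approx k s (b x).
Proof.
move=> simple b_aut; elim: k x => [|k IHk] x //=.
have b_nbrs := perm_nbrs_aut x simple b_aut.
under eq_bigr do rewrite IHk.
by rewrite -(big_map b predT) (perm_big _ b_nbrs) -(perm_size b_nbrs) size_map.
Qed.

Lemma odometer_bounded_aut b s x : is_simple_graph nbrs -> is_aut nbrs b ->
  odometer_bounded (Tact b s) x <-> odometer_bounded s (b x).
Proof.
by move=> simple b_aut; split=> -[M hM]; exists M => k;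
  move: (hM k); rewrite odometer_approx_aut.
Qed.

Lemma size_nbrs_gt0 x : infinite_graph V -> connected_graph nbrs ->
  (0 < size (nbrs x))%N.
Proof.
move=> V_infinite V_connected.
have [y yNx] : exists y, y != x.
  apply/not_existsP => all_x; apply: V_infinite.
  suff -> : [set: V] = [set x] by exact: finite_set1.
  by apply/seteqP; split => z // _; apply/eqP/negbNE/negP/all_x.
have [[|z p] [xp py]] := V_connected x y; first by rewrite -py eqxx in yNx.
by move: xp => /andP[]; rewrite /adj; case: (nbrs x).
Qed.

Section PositiveDegree.
Hypothesis deg_gt0 : forall x, (0 < size (nbrs x))%N.

Lemma odometer_approx_step k s x :
  s x - 1 + \sum_(y <- nbrs x) odometer_approx k s y
    <= deg x * odometer_approx k.+1 s x.
Proof.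
by rewrite /= mulrC -ler_pdivrMr ?ltr0n ?deg_gt0 // le_max lexx orbT.
Qed.

Lemma odometer_approx_le_stabilizer (s f : V -> R) :
  (forall x, 0 <= f x) -> (forall x, s x + laplacian nbrs f x <= 1) ->
  forall k x, odometer_approx k s x <= f x.
Proof.
move=> f_ge0 f_stab; elim=> [|k IHk] x /=; first exact: f_ge0.
rewrite ge_max f_ge0 ler_pdivrMr ?ltr0n ?deg_gt0 //=.
have := f_stab x; rewrite laplacianE.
have : \sum_(y <- nbrs x) odometer_approx k s y <= \sum_(y <- nbrs x) f y.
  by apply: ler_sum => y _; exact: IHk.
lra.
Qed.

Lemma odometer_bounded_nbr s x y :
  adj nbrs x y -> odometer_bounded s x -> odometer_bounded s y.
Proof.
move=> xy [M hM]; exists (deg x * M + 1 - s x) => k.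
have := odometer_approx_step k s x.
have : deg x * odometer_approx k.+1 s x <= deg x * M by rewrite ler_wpM2l.
rewrite (big_rem y xy) /=.
have : 0 <= \sum_(z <- rem y (nbrs x)) odometer_approx k s z.
  by apply: sumr_ge0 => z _; exact: odometer_approx_ge0.
lra.
Qed.

Lemma odometer_bounded_connected s x y : connected_graph nbrs ->
  odometer_bounded s x -> odometer_bounded s y.
Proof.
move=> V_connected; have [p [xp <-]] := V_connected x y.
elim: p x xp => [|z p IHp] x //= /andP[xz zp] bx.
exact/IHp/(odometer_bounded_nbr xz).
Qed.

End PositiveDegree.
End Odometer.

Section Measurability.
Variables (R : realType) (V : choiceType) (nbrs : V -> seq V) (o : V).

Lemma measurable_coord x : measurable_fun setT (fun s : RV R V => s x).
Proof.
move=> _ B mB; rewrite setTI; apply: sub_sigma_algebra.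
by exists x, B.
Qed.

Lemma measurable_odometer_approx k x :
  measurable_fun setT (fun s : RV R V => odometer_approx nbrs k s x).
Proof.
elim: k x => [|k IHk] x /=; first exact: measurable_cst.
apply: measurable_maxr; first exact: measurable_cst.
apply: measurable_funM; last exact: measurable_cst.
apply: measurable_funD; last exact: measurable_sum.
by apply: measurable_funB; [exact: measurable_coord|exact: measurable_cst].
Qed.

Lemma measurable_Tact b : measurable_fun setT (Tact b : RV R V -> RV R V).
Proof.
apply: (@measurability _ _ (RV R V) (RV R V) setT _ (@coord_sets R V)) => //.
move=> _ [A [x [B [mB ->]]] <-].
by apply: sub_sigma_algebra; exists (b x), B; rewrite setTI.
Qed.

Lemma integral_Tact (Gam : set (V -> V)) (mu : {measure set RV R V -> \bar R})
    a b (g : RV R V -> \bar R) :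
  invariant_measure Gam mu -> Gam a -> is_inv a b ->
  measurable_fun setT g -> (forall s, 0 <= g s)%E ->
  (\int[mu]_s g (Tact b s) = \int[mu]_s g s)%E.
Proof.
move=> mu_inv Ga ab mg g_ge0.
have := ge0_integral_pushforward (measurable_Tact b) mu measurableT mg
  (fun s _ => g_ge0 s).
rewrite preimage_setT => <-; apply: eq_measure_integral.
  exact: measurable_Tact.
by move=> ? A mA _; exact: (mu_inv a b Ga ab A mA).
Qed.

Definition odometer_le (M : nat) : set (RV R V) :=
  [set s | forall k, odometer_approx nbrs k s o <= M%:R].

Lemma measurable_odometer_le M : measurable (odometer_le M).
Proof.
have -> : odometer_le M =
    \bigcap_k ((fun s : RV R V => odometer_approx nbrs k s o)
                 @^-1` `]-oo, M%:R]).
  apply/seteqP; split => s /= hs k; first by rewrite /= in_itv /= hs.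
  by have := hs k I; rewrite /= in_itv.
apply: bigcapT_measurable => k; rewrite -[X in measurable X]setTI.
exact: measurable_odometer_approx.
Qed.

Lemma measurable_bigcup_odometer_le : measurable (\bigcup_M odometer_le M).
Proof. by apply: bigcupT_measurable => M; exact: measurable_odometer_le. Qed.

Lemma odometer_le_nondecreasing : nondecreasing_seq odometer_le.
Proof.
move=> m n mn; rewrite subsetEset => s hs k.
by rewrite (le_trans (hs k)) // ler_nat.
Qed.

Lemma bigcup_odometer_le s :
  (\bigcup_M odometer_le M) s <-> odometer_bounded nbrs s o.
Proof.
split; first by case=> M _ hM; exists M%:R.
case=> M hM; exists (Num.bound `|M|) => // k.
by rewrite (le_trans (hM k)) // (le_trans (ler_norm M)) // ltW // archi_boundP.
Qed.

End Measurability.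

Section Stabilization.
Variables (R : realType) (V : choiceType) (nbrs : V -> seq V)
  (Gam : set (V -> V)) (o : V) (P : probability (RV R V) R).
Hypotheses (simple : is_simple_graph nbrs) (V_connected : connected_graph nbrs)
  (deg_gt0 : forall x, (0 < size (nbrs x))%N)
  (Gam_aut : aut_subgroup nbrs Gam) (Gam_trans : transitive_action Gam)
  (P_inv : invariant_measure Gam P).
Local Notation deg := ((size (nbrs o))%:R : R).
Local Notation so := (fun s : RV R V => s o).
Local Notation odometer_le := (@odometer_le R V nbrs o).

Lemma integral_cst_probability (c : R) : (\int[P]_s c%:E = c%:E)%E.
Proof.
rewrite integral_cst // -[RHS]mule1; congr (_ * _)%E.
exact: probability_setT.
Qed.

Lemma Gam_inv_aut a b : Gam a -> is_inv a b -> is_aut nbrs b.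
Proof.
by case: Gam_aut => Gam_sub _ _ _ Ga; apply: is_aut_inv; exact: Gam_sub.
Qed.

Lemma Tact_preimage_bigcup_odometer_le a b : Gam a -> is_inv a b ->
  Tact b @^-1` (\bigcup_M odometer_le M) = \bigcup_M odometer_le M.
Proof.
move=> Ga ab; have b_aut := Gam_inv_aut Ga ab.
apply/seteqP; split=> s /bigcup_odometer_le bs; apply/bigcup_odometer_le.
  move/(odometer_bounded_aut _ _ simple b_aut): bs.
  exact: odometer_bounded_connected.
apply/(odometer_bounded_aut _ _ simple b_aut).
exact: odometer_bounded_connected bs.
Qed.

Definition trunc_odometer k (M : nat) (s : V -> R) x : R :=
  Num.min (odometer_approx nbrs k s x) M%:R.

Lemma trunc_odometer_ge0 k M s x : 0 <= trunc_odometer k M s x.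
Proof. by rewrite le_min odometer_approx_ge0 ler0n. Qed.

Lemma trunc_odometer_le k M s x : trunc_odometer k M s x <= M%:R.
Proof. by rewrite ge_min lexx orbT. Qed.

Lemma measurable_trunc_odometer k M x :
  measurable_fun setT (fun s : RV R V => trunc_odometer k M s x).
Proof.
exact: measurable_minr (measurable_odometer_approx (R:=R) _ _ _)
  (measurable_cst _).
Qed.

Lemma trunc_odometer_step k M (s : RV R V) :
  (so^\+ \_ (odometer_le M)) s + \sum_(y <- nbrs o) trunc_odometer k M s y
    <= 1 + so^\- s + deg * trunc_odometer k.+1 M s o.
Proof.
have so_split : so^\+ s = s o + so^\- s.
  by rewrite -[s o](congr1 (fun f => f s) (funrposBneg so)) /= subrK.
have so_neg_ge0 := funrneg_ge0 so s.
have [le_M|gt_M] := lerP (odometer_approx nbrs k.+1 s o) M%:R.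
- have -> : trunc_odometer k.+1 M s o = odometer_approx nbrs k.+1 s o.
    exact/min_idPl.
  have := odometer_approx_step deg_gt0 k s o.
  have : \sum_(y <- nbrs o) trunc_odometer k M s y
      <= \sum_(y <- nbrs o) odometer_approx nbrs k s y.
    by apply: ler_sum => y _; rewrite ge_min lexx.
  have : (so^\+ \_ (odometer_le M)) s <= so^\+ s.
    by rewrite patchE; case: ifP => _; rewrite ?funrpos_ge0.
  lra.
(* Above level M, s leaves odometer_le M and the truncation absorbs the sum. *)
- have -> : (so^\+ \_ (odometer_le M)) s = 0.
    rewrite patchE ifF //; apply/negbTE/negP => /set_mem /(_ k.+1).
    by rewrite leNgt gt_M.
  have -> : trunc_odometer k.+1 M s o = M%:R by exact/min_idPr/ltW.
  have : \sum_(y <- nbrs o) trunc_odometer k M s y <= \sum_(y <- nbrs o) M%:R.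
    by apply: ler_sum => y _; exact: trunc_odometer_le.
  rewrite sumr_cst_seq -mulr_natl; lra.
Qed.

Lemma integral_trunc_odometer_nbr k M y :
  (\int[P]_s (trunc_odometer k M s y)%:E
   = \int[P]_s (trunc_odometer k M s o)%:E)%E.
Proof.
have [a [Ga ay]] := Gam_trans y o.
have [b [_ ab]] : exists b, Gam b /\ is_inv a b.
  by case: Gam_aut => _ _ _; apply.
have b_aut := Gam_inv_aut Ga ab.
have boy : b o = y by rewrite -ay; case: ab => ab _; exact: ab.
rewrite -(integral_Tact (g := fun s => (trunc_odometer k M s o)%:E)
  P_inv Ga ab).
- apply: eq_integral => s _.
  by rewrite /trunc_odometer odometer_approx_aut // boy.
- by apply/measurable_EFinP; exact: measurable_trunc_odometer.
- by move=> s; rewrite lee_fin trunc_odometer_ge0.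
Qed.

Lemma measurable_restrict_funrpos M :
  measurable_fun setT (so^\+ \_ (odometer_le M)).
Proof.
apply/(measurable_restrictT _ _).1; first exact: measurable_odometer_le.
apply/(measurable_funS measurableT)/measurable_funrpos => //.
exact: measurable_coord.
Qed.

Lemma restrict_funrpos_ge0 M s : 0 <= (so^\+ \_ (odometer_le M)) s.
Proof. by rewrite patchE; case: ifP => _; rewrite ?funrpos_ge0. Qed.

Lemma integral_trunc_step_lhs k M :
  (\int[P]_s ((so^\+ \_ (odometer_le M)) s
       + \sum_(y <- nbrs o) trunc_odometer k M s y)%:E
   = \int[P]_(s in odometer_le M) (so^\+ s)%:E
     + deg%:E * \int[P]_s (trunc_odometer k M s o)%:E)%E.
Proof.
rewrite ge0_integral_EFinD //; first last.
- by move=> s; apply: sumr_ge0 => y _; exact: trunc_odometer_ge0.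
- exact: restrict_funrpos_ge0.
- by apply: measurable_sum => y; exact: measurable_trunc_odometer.
- exact: measurable_restrict_funrpos.
rewrite ge0_integral_EFin_sum; last 2 first.
- exact: measurable_trunc_odometer.
- by move=> y s; exact: trunc_odometer_ge0.
under eq_bigr do rewrite integral_trunc_odometer_nbr.
rewrite sumr_cst_seq mule_natl (integral_mkcond (odometer_le M)).
by congr (_ + _)%E; apply: eq_integral => s _; rewrite !patchE; case: ifP.
Qed.

Lemma integral_trunc_step_rhs k M :
  (\int[P]_s (1 + so^\- s + deg * trunc_odometer k M s o)%:E
   = 1 + \int[P]_s (so^\- s)%:E
     + deg%:E * \int[P]_s (trunc_odometer k M s o)%:E)%E.
Proof.
have m_neg : measurable_fun setT so^\-.
  by apply: measurable_funrneg; exact: measurable_coord.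
rewrite !ge0_integral_EFinD //; last 4 first.
- exact: measurable_funD.
- by apply: measurable_funM => //; exact: measurable_trunc_odometer.
- by move=> s; rewrite addr_ge0 ?funrneg_ge0.
- by move=> s; rewrite mulr_ge0 ?trunc_odometer_ge0.
rewrite ge0_integral_EFinZl //; first by rewrite integral_cst_probability.
- exact: measurable_trunc_odometer.
- by move=> s; exact: trunc_odometer_ge0.
Qed.

Lemma integral_trunc_odometer_step k M :
  (\int[P]_(s in odometer_le M) (so^\+ s)%:E
     + deg%:E * \int[P]_s (trunc_odometer k M s o)%:E
   <= 1 + \int[P]_s (so^\- s)%:E
     + deg%:E * \int[P]_s (trunc_odometer k.+1 M s o)%:E)%E.
Proof.
rewrite -integral_trunc_step_lhs -integral_trunc_step_rhs.
apply: ge0_le_integral_EFin; last exact: trunc_odometer_step.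
- apply: measurable_funD; first exact: measurable_restrict_funrpos.
  by apply: measurable_sum => y; exact: measurable_trunc_odometer.
- apply: measurable_funD.
    by apply: measurable_funD => //; apply: measurable_funrneg;
      exact: measurable_coord.
  by apply: measurable_funM => //; exact: measurable_trunc_odometer.
- move=> s; rewrite addr_ge0 ?restrict_funrpos_ge0 //.
  by apply: sumr_ge0 => y _; exact: trunc_odometer_ge0.
Qed.

Lemma integral_trunc_odometer_le k M :
  (\int[P]_s (trunc_odometer k M s o)%:E <= (M%:R)%:E)%E.
Proof.
apply: le_trans (ge0_le_integral_EFin P (measurable_trunc_odometer k M o)
  (measurable_cst (M%:R : R)) (fun s => trunc_odometer_ge0 k M s o)
  (fun s => trunc_odometer_le k M s o)) _.
by rewrite /= integral_cst_probability.
Qed.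

Lemma integral_odometer_le_funrpos M :
  (\int[P]_s (so^\- s)%:E)%E \is a fin_num ->
  (\int[P]_(s in odometer_le M) (so^\+ s)%:E <= 1 + \int[P]_s (so^\- s)%:E)%E.
Proof.
move=> neg_fin.
apply: (bounded_drift_lee (M := deg * M%:R) _ _
  (fun k => integral_trunc_odometer_step k M)).
  by rewrite fin_numD neg_fin.
move=> k; rewrite mule_ge0 ?lee_fin ?ler0n ?integral_ge0 //=.
  by rewrite EFinM lee_wpmul2l ?lee_fin ?ler0n ?integral_trunc_odometer_le.
by move=> s _; rewrite lee_fin trunc_odometer_ge0.
Qed.

Lemma integral_funrpos_le : P (\bigcup_M odometer_le M) = 1%E ->
  (\int[P]_s (so^\- s)%:E)%E \is a fin_num ->
  (\int[P]_s (so^\+ s)%:E <= 1 + \int[P]_s (so^\- s)%:E)%E.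
Proof.
move=> N1 neg_fin.
have mN := @measurable_bigcup_odometer_le R V nbrs o.
have m_pos : measurable_fun setT (fun s : RV R V => (so^\+ s)%:E).
  by apply/measurable_EFinP/measurable_funrpos; exact: measurable_coord.
have pos_ge0 (s : RV R V) : (0 <= (so^\+ s)%:E)%E.
  by rewrite lee_fin funrpos_ge0.
have notN0 : P (~` \bigcup_M odometer_le M) = 0%E.
  by rewrite probability_setC // N1 subee.
rewrite (ge0_negligible_integral _ _ _ _ notN0) //; last exact: measurableC.
rewrite setTD setCK.
have cvg_pos := ge0_nondecreasing_set_cvg_integral (mu := P)
  (@odometer_le_nondecreasing R V nbrs o) (@measurable_odometer_le R V nbrs o)
  (fun M => measurable_funS measurableT (@subsetT _ _) m_pos)
  (fun M s _ => pos_ge0 s).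
apply: (lee_cvg_to cvg_pos (cvg_cst _)).
by apply: nearW => M; exact: integral_odometer_le_funrpos.
Qed.

End Stabilization.

Theorem lemma4p1 (R : realType) (V : choiceType) (nbrs : V -> seq V)
  (Gam : set (V -> V)) (o : V) (P : probability (RV R V) R) :
  is_simple_graph nbrs -> infinite_graph V -> connected_graph nbrs ->
  vertex_transitive nbrs ->
  aut_subgroup nbrs Gam -> transitive_action Gam ->
  invariant_measure Gam P -> ergodic_measure Gam P ->
  (\int[P]_s `|s o|%:E < +oo)%E ->
  (1%:E < \int[P]_s (s o)%:E)%E ->
  P.-negligible [set s : RV R V | stabilizes nbrs s].
Proof.
move=> simple V_infinite V_connected _ Gam_aut Gam_trans P_inv P_ergodic
  so_abs so_gt1.
have deg_gt0 x := size_nbrs_gt0 x V_infinite V_connected.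
pose N := \bigcup_M odometer_le (R:=R) nbrs o M.
have mN : measurable N by exact: measurable_bigcup_odometer_le.
exists N; split => //; last first.
  move=> s [f [f_ge0 f_stab]]; apply/bigcup_odometer_le; exists (f o).
  by move=> k; exact: (odometer_approx_le_stabilizer deg_gt0 f_ge0 f_stab).
have [//|N1] := P_ergodic N mN
  (Tact_preimage_bigcup_odometer_le R o simple V_connected deg_gt0 Gam_aut).
have so_int : P.-integrable setT (EFin \o (fun s : RV R V => s o)).
  apply/integrableP; split; last exact: so_abs.
  by apply/measurable_EFinP; exact: measurable_coord.
have neg_fin := integrable_fin_num measurableT
  (integrable_funrneg measurableT so_int).
have so_le1 : (\int[P]_s (s o)%:E <= 1)%E.
  rewrite integralE funerpos funerneg lee_subel_addr //.
  exact: integral_funrpos_le simple deg_gt0 Gam_aut Gam_trans P_inv N1 neg_fin.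
by have := lt_le_trans so_gt1 so_le1; rewrite ltxx.
Qed.
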